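(* Let $(\mathcal{E},\mathcal{L},\mathcal{B})$ be a weakly left resolving labelled space with associated inverse semigroup $S$, let $\alpha\in\mathcal{L}^\infty$ and let $\{\mathcal{F}_n\}_{n\ge0}$ be an admissible family for $\alpha$. For $n\ge0$ define \[\overline{\mathcal{F}}_n=\{A\in\mathcal{B}_{\alpha_{1,n}}:\ r(A,\alpha_{n+1,m})\in\mathcal{F}_m\ \text{for some } m\ge n\}.\] Then: (i) $\mathcal{F}_n\subseteq\overline{\mathcal{F}}_n$ for all $n\ge0$; (ii) $\{\overline{\mathcal{F}}_n\}_{n\ge0}$ is a complete family for $\alpha$; (iii) the filters $\bigcup_{n}\bigcup_{A\in\mathcal{F}_n}\uparrow(\alpha_{1,n},A,\alpha_{1,n})$ and $\bigcup_{n}\bigcup_{A\in\overline{\mathcal{F}}_n}\uparrow(\alpha_{1,n},A,\alpha_{1,n})$ of $E(S)$ coincide; (iv) if $\xi$ denotes this filter, then $\{A\in\mathcal{B}:(\alpha_{1,n},A,\alpha_{1,n})\in\xi\}=\overline{\mathcal{F}}_n$ for all $n\ge0$.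
   Context: A directed graph $\mathcal{E}=(\mathcal{E}^0,\mathcal{E}^1,r,s)$ has countable nonempty vertex set, edge set, range/source maps; paths satisfy $r(\lambda_i)=s(\lambda_{i+1})$. A labelled graph has a surjective labelling $\mathcal{L}:\mathcal{E}^1\to\mathcal{A}$ extended letterwise to finite and infinite paths. $\omega$ is the empty word, $\mathcal{L}^+=\bigcup_{n\ge1}\mathcal{L}(\mathcal{E}^n)$, $\mathcal{L}^*=\{\omega\}\cup\mathcal{L}^+$, $\mathcal{L}^\infty$ the labels of infinite paths; $\alpha_{i,j}=\alpha_i\cdots\alpha_j$ for $i\le j$, $=\omega$ for $j<i$. For $A\subseteq\mathcal{E}^0$, $\alpha\in\mathcal{L}^+$: $r(A,\alpha)=\{r(\lambda):\mathcal{L}(\lambda)=\alpha,\ s(\lambda)\in A\}$, $r(A,\omega)=A$, $r(\alpha)=r(\mathcal{E}^0,\alpha)$. $\mathcal{B}$ accommodating: closed under $r(\cdot,\alpha)$, finite intersections and unions, contains $r(\alpha)$ for $\alpha\in\mathcal{L}^+$; labelled space weakly left resolving if $r(A\cap B,\alpha)=r(A,\alpha)\cap r(B,\alpha)$ for $A,B\in\mathcal{B}$, $\alpha\in\mathcal{L}^+$. $\mathcal{B}_\alpha=\mathcal{B}\cap\mathcal{P}(r(\alpha))$. $S$ = triples $(\alpha,A,\beta)$, $\alpha,\beta\in\mathcal{L}^*$, $\emptyset\ne A\in\mathcal{B}_\alpha\cap\mathcal{B}_\beta$, plus $0$; product $(\alpha,A,\beta)(\gamma,B,\delta)=(\alpha\gamma',r(A,\gamma')\cap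 B,\delta)$ if $\gamma=\beta\gamma'$, $=(\alpha,A\cap r(B,\beta'),\delta\beta')$ if $\beta=\gamma\beta'$, $=0$ otherwise (empty middle entry identified with $0$). $E(S)=\{(\alpha,A,\alpha)\}\cup\{0\}$, $p\le q$ iff $pq=p$; $(\alpha,A,\alpha)\le(\beta,B,\beta)$ iff $\alpha=\beta\alpha'$ and $A\subseteq r(B,\alpha')$; $\uparrow x=\{y:x\le y\}$. Filters in $\mathcal{B}_\alpha$ (under inclusion): nonempty upward-closed subsets not containing $\emptyset$ and closed under finite intersections. A family $\{\mathcal{F}_n\}_{n\ge0}$ with $\mathcal{F}_n$ a filter in $\mathcal{B}_{\alpha_{1,n}}$ for $n>0$ and $\mathcal{F}_0$ a filter in $\mathcal{B}$ or empty is admissible for $\alpha$ if $\mathcal{F}_n\subseteq\{A\in\mathcal{B}_{\alpha_{1,n}}:r(A,\alpha_{n+1})\in\mathcal{F}_{n+1}\}$ for all $n\ge0$, and complete if equality holds for all $n\ge0$. *)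

From Stdlib Require Import List Arith.
Import ListNotations.
Set Implicit Arguments.

Section LS.
Variables (V Ed Alph : Type) (rg src : Ed -> V) (L : Ed -> Alph).

Definition subset (A C : V -> Prop) : Prop := forall v, A v -> C v.
Definition setI (A C : V -> Prop) : V -> Prop := fun v => A v /\ C v.
Definition setU (A C : V -> Prop) : V -> Prop := fun v => A v \/ C v.
Definition seteq (A C : V -> Prop) : Prop := forall v, A v <-> C v.
Definition setT : V -> Prop := fun _ => True.

Fixpoint is_path (l : list Ed) : Prop :=
  match l with
  | [] => True
  | e :: l' => match l' with
               | [] => True
               | f :: _ => rg e = src f /\ is_path l'
               end
  end.

Definition in_Lplus (w : list Alph) : Prop :=
  exists (e : Ed) (l : list Ed), is_path (e :: l) /\ map L (e :: l) = w.
Definition in_Lstar (w : list Alph) : Prop := w = [] \/ in_Lplus w.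

(** L^infty : labels of infinite paths; alpha i is the letter alpha_{i+1} *)
Definition in_Linf (alpha : nat -> Alph) : Prop :=
  exists f : nat -> Ed, (forall i, rg (f i) = src (f (S i))) /\
                        (forall i, alpha i = L (f i)).

(** alpha_{i,j} = alpha_i ... alpha_j (1-based), omega if j < i *)
Definition seg (alpha : nat -> Alph) (i j : nat) : list Alph :=
  map (fun k => alpha (k - 1)) (seq i (S j - i)).

Definition rset (A : V -> Prop) (w : list Alph) : V -> Prop :=
  match w with
  | [] => A
  | _ => fun v => exists (e : Ed) (l : list Ed),
           is_path (e :: l) /\ map L (e :: l) = w /\ A (src e) /\ rg (last l e) = v
  end.

Definition rword (w : list Alph) : V -> Prop := rset setT w.

Definition countable (T : Type) : Prop :=
  exists f : T -> nat, forall x y, f x = f y -> x = y.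

Definition labelled_graph : Prop :=
  countable V /\ inhabited V /\ countable Ed /\ (forall a : Alph, exists e, L e = a).

Definition accommodating (B : (V -> Prop) -> Prop) : Prop :=
  (forall A w, B A -> in_Lplus w -> B (rset A w)) /\
  (forall A C, B A -> B C -> B (setI A C)) /\
  (forall A C, B A -> B C -> B (setU A C)) /\
  (forall w, in_Lplus w -> B (rword w)).

Definition weakly_left_resolving (B : (V -> Prop) -> Prop) : Prop :=
  forall A C w, B A -> B C -> in_Lplus w ->
    seteq (rset (setI A C) w) (setI (rset A w) (rset C w)).

Definition Bw (B : (V -> Prop) -> Prop) (w : list Alph) (A : V -> Prop) : Prop :=
  B A /\ subset A (rword w).

Definition is_filter_in (D : (V -> Prop) -> Prop) (F : (V -> Prop) -> Prop) : Prop :=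
  (exists A, F A) /\
  (forall A, F A -> D A) /\
  (forall A, F A -> exists v, A v) /\
  (forall A C, F A -> D C -> subset A C -> F C) /\
  (forall A C, F A -> F C -> F (setI A C)).

Definition family_filters (B : (V -> Prop) -> Prop) (alpha : nat -> Alph)
    (F : nat -> (V -> Prop) -> Prop) : Prop :=
  (is_filter_in B (F 0) \/ (forall A, ~ F 0 A)) /\
  (forall n, 0 < n -> is_filter_in (Bw B (seg alpha 1 n)) (F n)).

Definition admissible (B : (V -> Prop) -> Prop) (alpha : nat -> Alph)
    (F : nat -> (V -> Prop) -> Prop) : Prop :=
  family_filters B alpha F /\
  (forall n A, F n A ->
     Bw B (seg alpha 1 n) A /\ F (S n) (rset A (seg alpha (S n) (S n)))).

Definition complete (B : (V -> Prop) -> Prop) (alpha : nat -> Alph)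
    (F : nat -> (V -> Prop) -> Prop) : Prop :=
  family_filters B alpha F /\
  (forall n A, F n A <->
     (Bw B (seg alpha 1 n) A /\ F (S n) (rset A (seg alpha (S n) (S n))))).

Definition Fbar (B : (V -> Prop) -> Prop) (alpha : nat -> Alph)
    (F : nat -> (V -> Prop) -> Prop) (n : nat) (A : V -> Prop) : Prop :=
  Bw B (seg alpha 1 n) A /\
  exists m, n <= m /\ F m (rset A (seg alpha (S n) m)).

(** E(S): idempotents (alpha, A, alpha) and 0 *)
Inductive idem : Type :=
| Zero : idem
| Trip : list Alph -> (V -> Prop) -> idem.

Definition in_ES (B : (V -> Prop) -> Prop) (p : idem) : Prop :=
  match p with
  | Zero => True
  | Trip w A => in_Lstar w /\ Bw B w A /\ exists v, A v
  end.

Definition idem_le (p q : idem) : Prop :=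
  match p, q with
  | Zero, _ => True
  | Trip _ _, Zero => False
  | Trip a A, Trip b C => exists a', a = b ++ a' /\ subset A (rset C a')
  end.

Definition upset (B : (V -> Prop) -> Prop) (x : idem) (y : idem) : Prop :=
  in_ES B y /\ idem_le x y.

Definition filt_of (B : (V -> Prop) -> Prop) (alpha : nat -> Alph)
    (F : nat -> (V -> Prop) -> Prop) (y : idem) : Prop :=
  exists n A, F n A /\ upset B (Trip (seg alpha 1 n) A) y.

End LS.

From Stdlib Require Import List Arith Lia Classical.
Import ListNotations.
Set Implicit Arguments.

(* Pushing a set forward along alpha_{n+1,m} and then along alpha_{m+1,k} is
   the same as pushing it along alpha_{n+1,k}; with admissibility this shows
   that once r(A, alpha_{n+1,m}) lies in F_m, r(A, alpha_{n+1,k}) lies in F_k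
   for every k >= m.  So any two members A, C of F-bar_n reach a common filter
   F_k, where weak left resolution identifies r(A, w) /\ r(C, w) with
   r(A /\ C, w): F-bar_n is a filter.  The remaining claims are bookkeeping with
   the order of E(S), in which (alpha_{1,m}, r(A, alpha_{n+1,m}), alpha_{1,m})
   lies below (alpha_{1,n}, A, alpha_{1,n}). *)

Lemma last_cons_default (T : Type) (a d : T) (l : list T) : last (a :: l) d = last l a.
Proof.
  revert a d; induction l as [|b l IH]; intros a d; [reflexivity|].
  change (last (b :: l) d = last (b :: l) a). now rewrite !IH.
Qed.

Lemma last_app_cons (T : Type) (l l' : list T) (a d : T) :
  last (l ++ a :: l') d = last l' a.
Proof.
  revert d; induction l as [|b l IH]; intros d; simpl app; now rewrite last_cons_default.
Qed.

Lemma seg_app (Alph : Type) (alpha : nat -> Alph) i j k :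
  i <= S j -> j <= k -> seg alpha i j ++ seg alpha (S j) k = seg alpha i k.
Proof.
  intros Hij Hjk; unfold seg; rewrite <- map_app; f_equal.
  replace (S k - i) with ((S j - i) + (S k - S j)) by lia.
  rewrite seq_app; do 2 f_equal; lia.
Qed.

Lemma seg_empty (Alph : Type) (alpha : nat -> Alph) n : seg alpha (S n) n = [].
Proof. unfold seg; now rewrite Nat.sub_diag. Qed.

Lemma length_seg1 (Alph : Type) (alpha : nat -> Alph) n : length (seg alpha 1 n) = n.
Proof. unfold seg; rewrite length_map, length_seq; lia. Qed.

Section LabelledSpace.
Variables (V Ed Alph : Type) (rg src : Ed -> V) (L : Ed -> Alph).

Lemma is_path_app (l l' : list Ed) (e e' : Ed) :
  is_path rg src (e :: l) -> is_path rg src (e' :: l') -> rg (last l e) = src e' ->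
  is_path rg src (e :: l ++ e' :: l').
Proof.
  revert e; induction l as [|x l IH]; intros e Hl Hl' Hlink; [now split|].
  destruct Hl as [Hex Hl]; split; [exact Hex|].
  apply IH; [exact Hl|exact Hl'|now rewrite last_cons_default in Hlink].
Qed.

Lemma is_path_app_inv (l l' : list Ed) (e e' : Ed) :
  is_path rg src (e :: l ++ e' :: l') ->
  is_path rg src (e :: l) /\ is_path rg src (e' :: l') /\ rg (last l e) = src e'.
Proof.
  revert e; induction l as [|x l IH]; intros e H.
  - destruct H as [Hlink Hl']; split; [exact I|split; assumption].
  - destruct H as [Hex H]; destruct (IH x H) as (Hl & Hl' & Hlink).
    rewrite last_cons_default; repeat split; auto.
Qed.

Lemma rset_app A u w :
  seteq (rset rg src L (rset rg src L A u) w) (rset rg src L A (u ++ w)).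
Proof.
  destruct u as [|a u]; [intro; tauto|].
  destruct w as [|b w]; [rewrite app_nil_r; intro; tauto|].
  intro v; split.
  - intros (e' & l' & Hp' & Hw & (e & l & Hp & Hu & HA & Hlink) & Hv).
    exists e, (l ++ e' :: l'); repeat split.
    + now apply is_path_app.
    + now rewrite app_comm_cons, map_app, Hu, Hw.
    + exact HA.
    + now rewrite last_app_cons.
  - intros (e & l & Hp & Huw & HA & Hv).
    apply map_eq_app in Huw as ([|e1 l1] & [|e2 l2] & Hl & Hu & Hw);
      try discriminate.
    injection Hl as <- ->.
    apply is_path_app_inv in Hp as (Hp1 & Hp2 & Hlink).
    exists e2, l2; repeat split; auto.
    + exists e, l1; auto.
    + now rewrite <- Hv, last_app_cons.
Qed.

Lemma rset_subset A C w :
  subset A C -> subset (rset rg src L A w) (rset rg src L C w).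
Proof.
  intros HAC v; destruct w; [apply HAC|].
  intros (e & l & Hp & Hw & HA & Hv); exists e, l; auto.
Qed.

Lemma rset_nonempty A w v : rset rg src L A w v -> exists u, A u.
Proof. destruct w; [eauto|]. intros (e & l & _ & _ & HA & _); eauto. Qed.

Lemma seg_in_Lplus alpha n m :
  in_Linf rg src L alpha -> n < m -> in_Lplus rg src L (seg alpha (S n) m).
Proof.
  intros [f [Hf Hlab]] Hnm; unfold seg.
  replace (S m - S n) with (S (m - S n)) by lia.
  generalize (m - S n) as d; intro d; clear Hnm.
  exists (f n), (map f (seq (S n) d)); split.
  - revert n; induction d as [|d IH]; intros n; [exact I|].
    split; [apply Hf|apply IH].
  - rewrite <- seq_shift, map_map; simpl; rewrite Nat.sub_0_r, Hlab; f_equal.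
    rewrite <- !seq_shift, !map_map; apply map_ext; intro; now rewrite Hlab.
Qed.

Lemma seg_in_Lstar alpha n :
  in_Linf rg src L alpha -> in_Lstar rg src L (seg alpha 1 n).
Proof.
  intros Halpha; destruct n; [now left|].
  right; apply seg_in_Lplus; [exact Halpha|lia].
Qed.

Lemma idem_le_refl u A : idem_le rg src L (Trip u A) (Trip u A).
Proof. exists []; rewrite app_nil_r; split; [reflexivity|now intro]. Qed.

Lemma idem_le_trans p q s :
  idem_le rg src L p q -> idem_le rg src L q s -> idem_le rg src L p s.
Proof.
  destruct p as [|a A]; [trivial|]; destruct q as [|b C]; [contradiction|].
  destruct s as [|c D]; [contradiction|].
  intros (a' & -> & HAC) (b' & -> & HCD); exists (b' ++ a'); split.
  - now rewrite app_assoc.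
  - intros v Hv; apply rset_app; exact (rset_subset a' HCD _ (HAC v Hv)).
Qed.

Lemma idem_le_rset u w A : idem_le rg src L (Trip (u ++ w) (rset rg src L A w)) (Trip u A).
Proof. exists w; split; [reflexivity|now intro]. Qed.

Lemma idem_le_seg_inv alpha n k A C :
  idem_le rg src L (Trip (seg alpha 1 k) C) (Trip (seg alpha 1 n) A) ->
  n <= k /\ subset C (rset rg src L A (seg alpha (S n) k)).
Proof.
  intros (a' & Hseg & HCA).
  assert (Hnk : n <= k).
  { apply (f_equal (@length _)) in Hseg.
    rewrite length_app, !length_seg1 in Hseg; lia. }
  rewrite <- (@seg_app _ alpha 1 n k) in Hseg by lia.
  apply app_inv_head in Hseg as <-; now split.
Qed.

End LabelledSpace.

Lemma filter_in_Bw_nil (V Ed Alph : Type) (rg src : Ed -> V) (L : Ed -> Alph) B G :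
  is_filter_in (Bw rg src L B []) G -> is_filter_in B G.
Proof.
  intros (Hne & HB & Hnonempty & Hup & Hcap); repeat split; auto.
  - intros A HA; apply HB, HA.
  - intros A C HA HC HAC; apply (Hup A); [exact HA|now split|exact HAC].
Qed.

Section AdmissibleFamily.
Variables (V Ed Alph : Type) (rg src : Ed -> V) (L : Ed -> Alph).
Variables (B : (V -> Prop) -> Prop) (alpha : nat -> Alph) (F : nat -> (V -> Prop) -> Prop).
Hypotheses (Hacc : accommodating rg src L B)
           (Hwlr : weakly_left_resolving rg src L B)
           (Halpha : in_Linf rg src L alpha)
           (HF : admissible rg src L B alpha F).

Local Notation r := (rset rg src L).
Local Notation Bseg n := (Bw rg src L B (seg alpha 1 n)).
Local Notation Fbar' := (Fbar rg src L B alpha F).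

Lemma rset_seg_app A n m k : n <= m -> m <= k ->
  seteq (r (r A (seg alpha (S n) m)) (seg alpha (S m) k)) (r A (seg alpha (S n) k)).
Proof.
  intros Hnm Hmk v; rewrite <- (@seg_app _ alpha (S n) m k) by lia; apply rset_app.
Qed.

Lemma Bw_rset_seg n k A : Bseg n A -> n <= k -> Bseg k (r A (seg alpha (S n) k)).
Proof.
  intros [HA Hsub] Hnk.
  destruct (Nat.eq_dec n k) as [<-|Hne]; [rewrite seg_empty; now split|].
  split.
  - apply (proj1 Hacc); [exact HA|apply seg_in_Lplus; [exact Halpha|lia]].
  - intros v Hv; eapply rset_subset in Hv; [|exact Hsub].
    apply rset_app in Hv; now rewrite seg_app in Hv by lia.
Qed.

(* F_0 may be empty, so a filter structure on F_m needs a witness. *)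
Lemma admissible_filter m X : F m X -> is_filter_in (Bseg m) (F m).
Proof.
  destruct HF as [[[HF0|HF0] HFpos] _]; intros HX; destruct m as [|m].
  - destruct HF0 as (Hne & HB & Hnonempty & Hup & Hcap); repeat split; auto.
    intros A C HA [HC _]; eauto.
  - apply HFpos; lia.
  - now destruct (HF0 X).
  - apply HFpos; lia.
Qed.

Lemma admissible_upward m X Y : F m X -> Bseg m Y -> subset X Y -> F m Y.
Proof.
  intros HX HY HXY; destruct (admissible_filter HX) as (_ & _ & _ & Hup & _); eauto.
Qed.

Lemma admissible_nonempty m X : F m X -> exists v, X v.
Proof. intros HX; destruct (admissible_filter HX) as (_ & _ & Hne & _); auto. Qed.

Lemma admissible_rset_seg n k X : F n X -> n <= k -> F k (r X (seg alpha (S n) k)).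
Proof.
  intros HX Hnk; induction Hnk as [|k Hnk IH]; [now rewrite seg_empty|].
  destruct (proj2 HF k _ IH) as [HBk HFk].
  apply (admissible_upward HFk).
  - apply Bw_rset_seg; [apply (proj2 HF n _ HX)|lia].
  - intros v Hv; apply rset_seg_app in Hv; [exact Hv|lia|lia].
Qed.

Lemma admissible_rset_seg_le n m k A :
  Bseg n A -> F m (r A (seg alpha (S n) m)) -> n <= m -> m <= k ->
  F k (r A (seg alpha (S n) k)).
Proof.
  intros HA Hm Hnm Hmk.
  apply (admissible_upward (admissible_rset_seg Hm Hmk)).
  - apply Bw_rset_seg; [exact HA|lia].
  - intros v Hv; apply rset_seg_app in Hv; [exact Hv|lia|lia].
Qed.

Lemma F_sub_Fbar n A : F n A -> Fbar' n A.
Proof.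
  intros HA; split; [apply (proj2 HF n _ HA)|].
  exists n; split; [reflexivity|now rewrite seg_empty].
Qed.

Lemma Fbar_nonempty n A : Fbar' n A -> exists v, A v.
Proof.
  intros [_ (m & _ & Hm)]; destruct (admissible_nonempty Hm) as [v Hv].
  eapply rset_nonempty; exact Hv.
Qed.

Lemma Fbar_filter n : (exists A, Fbar' n A) -> is_filter_in (Bseg n) (Fbar' n).
Proof.
  intros Hne; split; [exact Hne|]; split; [intros A [HA _]; exact HA|].
  split; [apply Fbar_nonempty|]; split.
  - intros A C [HA (m & Hnm & Hm)] HC HAC; split; [exact HC|].
    exists m; split; [exact Hnm|].
    apply (admissible_upward Hm); [now apply Bw_rset_seg|now apply rset_subset].
  - intros A C [HA (m1 & Hnm1 & Hm1)] [HC (m2 & Hnm2 & Hm2)].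
    generalize (Nat.le_max_l m1 m2) (Nat.le_max_r m1 m2).
    generalize (Nat.max m1 m2) as k; intros k Hk1 Hk2.
    assert (HAk := admissible_rset_seg_le HA Hm1 Hnm1 Hk1).
    assert (HCk := admissible_rset_seg_le HC Hm2 Hnm2 Hk2).
    assert (HAC : Bseg n (setI A C)).
    { split; [apply (proj1 (proj2 Hacc)); [apply HA|apply HC]|].
      intros v [Hv _]; now apply HA. }
    split; [exact HAC|]; exists k; split; [lia|].
    destruct (admissible_filter HAk) as (_ & _ & _ & _ & Hcap).
    apply (admissible_upward (Hcap _ _ HAk HCk));
      [apply Bw_rset_seg; [exact HAC|lia]|].
    destruct (Nat.eq_dec n k) as [<-|Hne']; [rewrite seg_empty; now intro|].
    intros v Hv; apply (Hwlr (proj1 HA) (proj1 HC));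
      [apply seg_in_Lplus; [exact Halpha|lia]|exact Hv].
Qed.

Lemma Fbar_family_filters : family_filters rg src L B alpha Fbar'.
Proof.
  split.
  - destruct (classic (exists A, Fbar' 0 A)) as [Hne|Hempty].
    + left; apply filter_in_Bw_nil with (rg := rg) (src := src) (L := L).
      exact (Fbar_filter Hne).
    + right; intros A HA; apply Hempty; eauto.
  - intros n Hn; apply Fbar_filter.
    destruct (proj2 (proj1 HF) n Hn) as ([A HA] & _); exists A; now apply F_sub_Fbar.
Qed.

Lemma Fbar_succ_iff n A :
  Fbar' n A <-> Bseg n A /\ Fbar' (S n) (r A (seg alpha (S n) (S n))).
Proof.
  split.
  - intros [HA (m & Hnm & Hm)]; split; [exact HA|].
    assert (HAn : Bseg (S n) (r A (seg alpha (S n) (S n))))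
      by (apply Bw_rset_seg; [exact HA|lia]).
    split; [exact HAn|]; exists (Nat.max m (S n)); split; [lia|].
    apply (admissible_upward
             (admissible_rset_seg_le HA Hm Hnm (Nat.le_max_l m (S n)))).
    + apply Bw_rset_seg; [exact HAn|lia].
    + intros v Hv; apply rset_seg_app; [lia|lia|exact Hv].
  - intros [HA [_ (m & Hnm & Hm)]]; split; [exact HA|].
    exists m; split; [lia|].
    apply (admissible_upward Hm); [apply Bw_rset_seg; [exact HA|lia]|].
    intros v Hv; apply rset_seg_app in Hv; [exact Hv|lia|lia].
Qed.

Lemma Fbar_complete : complete rg src L B alpha Fbar'.
Proof. exact (conj Fbar_family_filters Fbar_succ_iff). Qed.

Lemma filt_of_Fbar y :
  filt_of rg src L B alpha F y <-> filt_of rg src L B alpha Fbar' y.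
Proof.
  split.
  - intros (n & A & HA & Hy); exists n, A; split; [now apply F_sub_Fbar|exact Hy].
  - intros (n & A & [HA (m & Hnm & Hm)] & [Hy Hle]).
    exists m, (r A (seg alpha (S n) m)); split; [exact Hm|split; [exact Hy|]].
    apply idem_le_trans with (q := Trip (seg alpha 1 n) A); [|exact Hle].
    rewrite <- (@seg_app _ alpha 1 n m) by lia; apply idem_le_rset.
Qed.

Lemma filt_of_trip_iff n A :
  B A /\ filt_of rg src L B alpha F (Trip (seg alpha 1 n) A) <-> Fbar' n A.
Proof.
  split.
  - intros [_ (k & C & HC & [(_ & HA & _) Hle])].
    apply idem_le_seg_inv in Hle as [Hnk HCA].
    split; [exact HA|]; exists k; split; [exact Hnk|].
    apply (admissible_upward HC); [now apply Bw_rset_seg|exact HCA].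
  - intros HA; split; [apply HA|]; apply filt_of_Fbar.
    exists n, A; split; [exact HA|]; split; [|apply idem_le_refl].
    split; [now apply seg_in_Lstar|split; [apply HA|now apply Fbar_nonempty with n]].
Qed.

End AdmissibleFamily.

Theorem mainTheorem10 (V Ed Alph : Type) (rg src : Ed -> V) (L : Ed -> Alph)
    (B : (V -> Prop) -> Prop)
    (Hgraph : labelled_graph V L)
    (Hacc : accommodating rg src L B)
    (Hwlr : weakly_left_resolving rg src L B)
    (alpha : nat -> Alph) (Halpha : in_Linf rg src L alpha)
    (F : nat -> (V -> Prop) -> Prop) (HF : admissible rg src L B alpha F) :
  (forall n A, F n A -> Fbar rg src L B alpha F n A) /\
  complete rg src L B alpha (Fbar rg src L B alpha F) /\
  (forall y, filt_of rg src L B alpha F y <->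
             filt_of rg src L B alpha (Fbar rg src L B alpha F) y) /\
  (forall n A, (B A /\ filt_of rg src L B alpha F (Trip (seg alpha 1 n) A)) <->
               Fbar rg src L B alpha F n A).
Proof.
  split; [|split; [|split]].
  - intros n A; apply F_sub_Fbar; assumption.
  - apply Fbar_complete; assumption.
  - intros y; apply filt_of_Fbar; assumption.
  - intros n A; apply filt_of_trip_iff; assumption.
Qed.
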